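(* Let ${\cal H}$ be a $1$-Sperner hypergraph and let $C$ be a hyperedge of ${\cal H}$ of maximum possible size. Then for every two distinct vertices $x,y\notin C$ and every two hyperedges $A$ containing $x$ and $B$ containing $y$, $|A|\le|B|$ implies $A\cap C\subseteq B\cap C$.
   Context: A hypergraph ${\cal H}=(V,{\cal E})$ consists of a finite vertex set $V$ and a set ${\cal E}$ of subsets of $V$. It is $1$-Sperner if every two distinct hyperedges $e,f$ satisfy $\min\{|e\setminus f|,|f\setminus e|\}=1$. *)

From mathcomp Require Import all_boot.
Set Implicit Arguments. Unset Strict Implicit. Unset Printing Implicit Defensive.

Definition one_Sperner (V : finType) (E : {set {set V}}) : Prop :=
  forall e f, e \in E -> f \in E -> e != f ->
    minn #|e :\: f| #|f :\: e| = 1.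

From mathcomp Require Import all_boot.
From mathcomp Require Import zify.

Set Implicit Arguments.
Unset Strict Implicit.
Unset Printing Implicit Defensive.

(* Since |e| <= |f| forces |e \ f| <= |f \ e|, in a 1-Sperner hypergraph the
   smaller of two distinct hyperedges has exactly one vertex outside the
   other.  Applied to a maximum hyperedge C, every other hyperedge B meets the
   complement of C in one vertex; hence B, containing y outside C, misses x.
   Applied to A and B, the only vertex of A outside B is x, so every vertex of
   A inside C lies in B. *)

Lemma leq_cardsD (T : finType) (e f : {set T}) :
  #|e| <= #|f| -> #|e :\: f| <= #|f :\: e|.
Proof. by rewrite !cardsD setIC; lia. Qed.

Lemma one_Sperner_cardsD (V : finType) (E : {set {set V}}) (e f : {set V}) :
  one_Sperner E -> e \in E -> f \in E -> e != f -> #|e| <= #|f| ->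
  #|e :\: f| = 1.
Proof.
move=> SpE eE fE nef le_ef.
by have := SpE _ _ eE fE nef; rewrite (minn_idPl (leq_cardsD le_ef)).
Qed.

Lemma cards1_eq (T : finType) (S : {set T}) (x y : T) :
  #|S| = 1 -> x \in S -> y \in S -> x = y.
Proof.
move=> S1 xS yS.
by have /card_le1_eqP/(_ x y xS yS) : #|S| <= 1 by rewrite S1.
Qed.

Theorem lemma5 (V : finType) (E : {set {set V}}) (C : {set V}) :
  one_Sperner E ->
  C \in E ->
  (forall e, e \in E -> #|e| <= #|C|) ->
  forall (x y : V) (A B : {set V}),
    x != y -> x \notin C -> y \notin C ->
    A \in E -> x \in A -> B \in E -> y \in B ->
    #|A| <= #|B| ->
    A :&: C \subset B :&: C.
Proof.
move=> SpE CE maxC x y A B nxy xNC yNC AE xA BE yB le_AB.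
have BneC : B != C by apply: contraNneq yNC => <-.
have BC1 : #|B :\: C| = 1 by exact: one_Sperner_cardsD SpE BE CE BneC (maxC _ BE).
have xNB : x \notin B.
  apply: contra nxy => xB; apply/eqP.
  by apply: (cards1_eq BC1); rewrite inE ?xNC ?yNC.
have AneB : A != B by apply: contraNneq xNB => <-.
have AB1 : #|A :\: B| = 1 by exact: one_Sperner_cardsD SpE AE BE AneB le_AB.
apply/subsetP => z /setIP [zA zC]; rewrite inE zC andbT.
apply: contraT => zNB.
have xz : x = z by apply: (cards1_eq AB1); rewrite inE ?xNB ?zNB.
by rewrite xz zC in xNC.
Qed.
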